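(* Let $G$ be a Nash equilibrium graph and $H\subseteq G$ a non-trivial $2$-edge-connected component. Let $\pi=u_0-u_1-\dots-u_k$ be a $2$-path in $H$, oriented so that each $u_i$ with $0\le i<k$ has bought the link $(u_i,u_{i+1})$, and suppose $g(G)\ge 2k$. For $0\le i\le k-2$ let $\Delta C(u_i)$ be the change in the cost of $u_i$ caused by the $2$-swap on $u_{i+1}$ (i.e. $u_i$ replaces its link $(u_i,u_{i+1})$ by the link $(u_i,u_{i+2})$). Then $$\Delta C(u_i)=U_{i+1}-U_{i+2}-\dots-U_{k-1}-N_i,$$ where $N_i$ is the number of vertices $v\in V(G)\setminus\bar\pi$ with $x_1(v)+k-i\le x_2(v)+i$.
   Context: Sum network creation game: players $V=\{1,\dots,n\}$, parameter $\alpha>0$; a strategy of $u$ is $s_u\subseteq V\setminus\{u\}$; $G_s$ has an edge $uv$ whenever $v\in s_u$ or $u\in s_v$, and is regarded as a digraph with arc $(u,v)$ when $v\in s_u$; the cost of $u$ is $c_u(s)=\alpha|s_u|+\sum_{v\ne u}d_{G_s}(u,v)$. A Nash equilibrium graph is $G_s$ for a strategy vector $s$ from which no player can strictly lower his cost unilaterally. A $2$-edge-connected component $H$ is a maximal bridgeless subgraph; non-trivial means at least $3$ vertices. For $u\in V(H)$, $T(u)$ is the connected component containing $u$ of the subgraph of $G$ induced by $(V(G)\setminus V(H))\cup\{u\}$; the weight of $u_i$ is $U_i=|T(u_i)|$. A $2$-path in $H$ is a path $u_0-\dots-u_k$ in $H$ with $deg^-_H(u_i)=deg^+_H(u_i)=1$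 for all $0<i<k$ (in- and out-degrees counted among arcs to vertices of $H$). $g(G)$ is the girth of $G$ ($\infty$ for a tree). The interior of $\pi$ is $\bar\pi=\bigcup_{0<j<k}T(u_j)$, and for $v\in V(G)\setminus\bar\pi$, $x_1(v)$ and $x_2(v)$ are the distances in the graph $G$ with the vertices of $\bar\pi$ removed from $v$ to $u_k$ and to $u_0$ respectively. *)

From HB Require Import structures.
From mathcomp Require Import all_boot all_order all_algebra.
From mathcomp Require Import reals.
Set Implicit Arguments. Unset Strict Implicit. Unset Printing Implicit Defensive.
Import Order.TTheory GRing.Theory Num.Theory.
Local Open Scope ring_scope.

(* A strategy vector assigns to each player the set of vertices he buys.      *)
Definition strategy (T : finType) := {ffun T -> {set T}}.

Definition valid_strategy {T : finType} (s : strategy T) : Prop :=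
  forall u, u \notin s u.

Definition adj {T : finType} (s : strategy T) : rel T :=
  fun u v => (v \in s u) || (u \in s v).

Definition restrict {T : finType} (e : rel T) (S : {set T}) : rel T :=
  fun x y => [&& x \in S, y \in S & e x y].

Fixpoint ball {T : finType} (e : rel T) (S : {set T}) (u : T) (k : nat)
  : {set T} :=
  if k is k'.+1 then
    ball e S u k' :|: [set y in S | [exists x in ball e S u k', e x y]]
  else [set x in S | x == u].

(* Distance from u to v in the induced subgraph on S: the least k such that v
   is within k steps.  When v is unreachable this returns #|T| (only used
   where the relevant graph is connected). *)
Definition dist_in {T : finType} (e : rel T) (S : {set T}) (u v : T) : nat :=
  find (fun k => v \in ball e S u k) (iota 0 #|T|).

Definition dist {T : finType} (s : strategy T) (u v : T) : nat :=
  dist_in (adj s) setT u v.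

(* Cost of u: alpha |s_u| + sum_{v <> u} d(u,v); None encodes +infinity
   (when some vertex is unreachable from u). *)
Definition cost {T : finType} {R : realType} (alpha : R) (s : strategy T)
  (u : T) : option R :=
  if [forall v, connect (adj s) u v]
  then Some (alpha * (#|s u|)%:R + (\sum_(v | v != u) dist s u v)%:R)
  else None.

Definition lt_cost {R : realType} (a b : option R) : bool :=
  match a, b with
  | Some x, Some y => x < y
  | Some _, None => true
  | None, _ => false
  end.

Definition update {T : finType} (s : strategy T) (u : T) (t : {set T})
  : strategy T := [ffun w => if w == u then t else s w].

Definition is_NE {T : finType} {R : realType} (alpha : R) (s : strategy T)
  : Prop :=
  valid_strategy s /\
  forall (u : T) (t : {set T}), u \notin t ->
    ~~ lt_cost (cost alpha (update s u t) u) (cost alpha s u).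

(* 2-edge-connected components, as vertex sets of induced subgraphs
   (maximal bridgeless subgraphs are induced). *)
Definition connected_in {T : finType} (e : rel T) (S : {set T}) : Prop :=
  forall x y, x \in S -> y \in S -> connect (restrict e S) x y.

Definition remove_edge {T : finType} (e : rel T) (a b : T) : rel T :=
  fun x y => e x y && ~~ (((x == a) && (y == b)) || ((x == b) && (y == a))).

Definition bridgeless_in {T : finType} (e : rel T) (S : {set T}) : Prop :=
  connected_in e S /\
  forall a b, a \in S -> b \in S -> e a b ->
    connect (restrict (remove_edge e a b) S) a b.

Definition two_ec_component {T : finType} (e : rel T) (H : {set T}) : Prop :=
  bridgeless_in e H /\
  forall S : {set T}, H \subset S -> bridgeless_in e S -> S = H.

Definition Tset {T : finType} (e : rel T) (H : {set T}) (u : T) : {set T} :=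
  [set v | connect (restrict e ((~: H) :|: [set u])) u v].

Definition outdeg_in {T : finType} (s : strategy T) (H : {set T}) (u : T) :=
  #|[set v in H | v \in s u]|.
Definition indeg_in {T : finType} (s : strategy T) (H : {set T}) (u : T) :=
  #|[set v in H | u \in s v]|.

Definition two_path {T : finType} (s : strategy T) (H : {set T}) (k : nat)
  (u : nat -> T) : Prop :=
  [/\ forall i, (i <= k)%N -> u i \in H,
      forall i j, (i <= k)%N -> (j <= k)%N -> u i = u j -> i = j,
      forall i, (i < k)%N -> adj s (u i) (u i.+1)
    & forall i, (0 < i < k)%N ->
        indeg_in s H (u i) = 1%N /\ outdeg_in s H (u i) = 1%N].

(* g(G) >= m : every cycle of G has length >= m (vacuous for forests) *)
Definition girth_ge {T : finType} (e : rel T) (m : nat) : Prop :=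
  forall c : seq T, (3 <= size c)%N -> uniq c -> cycle e c -> (m <= size c)%N.

Definition pibar {T : finType} (s : strategy T) (H : {set T}) (k : nat)
  (u : nat -> T) : {set T} :=
  \bigcup_(j < k | (0 < j)%N) Tset (adj s) H (u j).

Definition x1 {T : finType} (s : strategy T) (H : {set T}) (k : nat)
  (u : nat -> T) (v : T) : nat :=
  dist_in (adj s) (~: pibar s H k u) v (u k).
Definition x2 {T : finType} (s : strategy T) (H : {set T}) (k : nat)
  (u : nat -> T) (v : T) : nat :=
  dist_in (adj s) (~: pibar s H k u) v (u 0%N).

Definition Nset {T : finType} (s : strategy T) (H : {set T}) (k : nat)
  (u : nat -> T) (i : nat) : nat :=
  #|[set v | (v \notin pibar s H k u) &&
             (x1 s H k u v + (k - i) <= x2 s H k u v + i)%N]|.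

Definition swap2 {T : finType} (s : strategy T) (u : nat -> T) (i : nat)
  : strategy T :=
  update s (u i) ((s (u i) :\ u i.+1) :|: [set u i.+2]).

From HB Require Import structures.
From mathcomp Require Import all_boot all_order all_algebra.
From mathcomp Require Import reals.
From mathcomp Require Import zify lra.
Set Implicit Arguments. Unset Strict Implicit. Unset Printing Implicit Defensive.
Import Order.TTheory GRing.Theory Num.Theory.

(* Both distance profiles from u_i are given by one explicit formula.  As H is a
   maximal bridgeless subgraph, a branch T(h), h in H, meets the rest of G only
   at h, and an interior vertex u_j of the 2-path has no H-neighbours other
   than u_(j-1) and u_(j+1).  So if h(j) is the distance from u_i to u_j along
   the path, a vertex of T(u_j), 0 < j < k, lies at distance h(j) plus its
   depth in T(u_j), and every other vertex v at distance
   min (h(0) + x_2(v), h(k) + x_1(v)); the girth bound g(G) >= 2k gives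
   x_1(u_0) >= k, which makes the formula consistent at u_0 and u_k.  After the
   2-swap the same formula holds for the path with the chord u_i u_(i+2).
   A function is the distance from u_i as soon as it vanishes at u_i, grows by
   at most one along edges, and drops by one along some edge at every other
   vertex.  Comparing the two formulas vertex by vertex: T(u_(i+1)) moves one
   step away from u_i, each T(u_j) with j >= i+2 one step closer, and a vertex
   outside the interior one step closer exactly when it is counted by N_i. *)

Section Paths.
Local Open Scope nat_scope.
Variable T : finType.
Implicit Types (e : rel T) (S : {set T}).

Lemma restrict_sym e S : symmetric e -> symmetric (restrict e S).
Proof. by move=> sym x y; rewrite /restrict sym andbCA !andbA. Qed.

Lemma remove_edge_sym e a b : symmetric e -> symmetric (remove_edge e a b).
Proof.
move=> sym x y; rewrite /remove_edge sym; congr (_ && ~~ _).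
by rewrite orbC [(y == a) && _]andbC [(y == b) && _]andbC.
Qed.

Lemma path_restrict_mem e S x p : path (restrict e S) x p -> {subset p <= S}.
Proof.
elim: p x => [|y p IH] x //= /andP[/and3P[_ yS _] yp] z.
by rewrite inE => /predU1P[->|/(IH _ yp)].
Qed.

Lemma path_unrestrict e S x p : path (restrict e S) x p -> path e x p.
Proof. by apply: sub_path => a b /and3P[]. Qed.

Lemma path_restrict e S x p :
  path e x p -> x \in S -> {subset p <= S} -> path (restrict e S) x p.
Proof.
elim: p x => [|y p IH] x //= /andP[exy yp] xS pS.
have yS : y \in S by apply: pS; rewrite inE eqxx.
by rewrite /restrict xS yS exy IH // => z zp; apply: pS; rewrite inE zp orbT.
Qed.

Lemma path_remove_edge e a b x p : path e x p ->
  (a \notin x :: p) || (b \notin x :: p) -> path (remove_edge e a b) x p.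
Proof.
move=> xp nab; apply: (sub_in_path (P := mem (x :: p))) xp; last exact/allP.
move=> y z /= yp zp eyz; rewrite /remove_edge eyz /=.
apply/negP => /orP[]/andP[/eqP ya /eqP zb]; move: nab;
  by rewrite -ya -zb ?yp ?zp ?orbF.
Qed.

Lemma connect_restrict_mem e S x y : connect (restrict e S) x y -> x = y \/ y \in S.
Proof.
case/connectP=> [[|z p] xp ->]; [by left | right].
by apply: (path_restrict_mem xp); rewrite /= mem_last.
Qed.

Lemma connect_restrict_subset e S1 S2 x y : S1 \subset S2 ->
  connect (restrict e S1) x y -> connect (restrict e S2) x y.
Proof.
move=> sub; apply: connect_sub => a b /and3P[aS bS eab]; apply: connect1.
by rewrite /restrict (subsetP sub _ aS) (subsetP sub _ bS).
Qed.

Lemma connect_exit e (A : {set T}) x y : connect e x y -> x \in A -> y \notin A ->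
  exists z w, [/\ connect (restrict e A) x z, z \in A, w \notin A & e z w].
Proof.
case/connectP=> p + ->; elim: p x => [|z p IH] x /=; first by move=> _ ->.
case/andP=> exz zp xA yA; have [zA|zA] := boolP (z \in A); last by exists x, z.
have [a [b [za aA bA eab]]] := IH z zp zA yA; exists a, b; split => //.
by apply: connect_trans za; apply: connect1; rewrite /restrict xA zA.
Qed.

Lemma uniq_path_avoid_edge e S a b x p w : path e x p -> uniq (x :: p) ->
  {subset x :: p <= S} -> a != b -> w \in x :: p ->
  connect (restrict (remove_edge e a b) S) x w \/
  connect (restrict (remove_edge e a b) S) w (last x p).
Proof.
move=> + + + nab wp; case/splitPl: p / wp => p1 p2 lw.
rewrite cat_path -cat_cons cat_uniq lw => /andP[xp1 wp2] /and3P[_ disj _] pS.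
have sub1 : {subset x :: p1 <= S} by move=> z z1; apply: pS; rewrite mem_cat z1.
have sub2 : {subset w :: p2 <= S}.
  move=> z; rewrite inE => /predU1P[->|z2]; last by apply: pS; rewrite mem_cat z2 orbT.
  by rewrite -lw; apply: sub1; apply: mem_last.
have [out1|] := boolP ((a \notin x :: p1) || (b \notin x :: p1)).
  left; apply/connectP; exists p1; last by rewrite lw.
  apply: path_restrict (path_remove_edge xp1 out1) (sub1 _ _) _ => [|z z1];
    by rewrite ?inE ?eqxx ?sub1 // inE z1 orbT.
rewrite negb_or !negbK => /andP[a1 b1]; right.
have out2 : (a \notin w :: p2) || (b \notin w :: p2).
  have notin2 z : z \in x :: p1 -> z \in p2 = false.
    by move=> z1; apply/negbTE/negP => z2; move/hasP: disj; apply; exists z.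
  rewrite !inE (notin2 a a1) (notin2 b b1) !orbF.
  by rewrite -negb_and; apply/andP => -[/eqP aw /eqP bw]; rewrite aw bw eqxx in nab.
apply/connectP; exists p2; last by rewrite last_cat lw.
apply: path_restrict (path_remove_edge wp2 out2) (sub2 _ _) _ => [|z z2];
  by rewrite ?inE ?eqxx ?sub2 // inE z2 orbT.
Qed.

End Paths.

Section Distances.
Local Open Scope nat_scope.
Variables (T : finType) (e : rel T) (S : {set T}).
Implicit Types (u v w x y : T).

Lemma ball0 u v : (v \in ball e S u 0) = (v \in S) && (v == u).
Proof. by rewrite inE. Qed.

Lemma ballS u n : ball e S u n.+1 =
  ball e S u n :|: [set y in S | [exists x in ball e S u n, e x y]].
Proof. by []. Qed.

Lemma ball_sub u n : ball e S u n \subset S.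
Proof.
elim: n => [|n IH]; apply/subsetP => x; first by rewrite ball0 => /andP[].
by rewrite ballS !inE => /orP[/(subsetP IH)|/andP[]].
Qed.

Lemma ball_mono u m n : m <= n -> ball e S u m \subset ball e S u n.
Proof.
move/subnK <-; elim: (n - m) => [|d IH]; first by rewrite add0n.
by rewrite addSn ballS (subset_trans IH) ?subsetUl.
Qed.

Lemma ball_step u n x y : x \in ball e S u n -> y \in S -> e x y ->
  y \in ball e S u n.+1.
Proof.
move=> xn yS exy; rewrite ballS !inE yS; apply/orP; right.
by apply/existsP; exists x; rewrite xn.
Qed.

Lemma ball_connect u n v : v \in ball e S u n -> connect (restrict e S) u v.
Proof.
elim: n v => [|n IH] v; first by rewrite ball0 => /andP[_ /eqP->].
rewrite ballS !inE => /orP[/IH //|/andP[vS /existsP[x /andP[xn exv]]]].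
apply: connect_trans (IH x xn) (connect1 _).
by rewrite /restrict vS exv (subsetP (ball_sub u n)).
Qed.

Lemma dist_in_le u v n : v \in ball e S u n -> dist_in e S u v <= n.
Proof.
move=> vn; have [nT|Tn] := ltnP n #|T|; last first.
  by rewrite /dist_in (leq_trans (find_size _ _)) ?size_iota.
rewrite leqNgt; apply/negP => /(before_find 0).
by rewrite nth_iota // add0n vn.
Qed.

Lemma ball_dist_in u v :
  has (fun n => v \in ball e S u n) (iota 0 #|T|) -> v \in ball e S u (dist_in e S u v).
Proof.
move=> vT; have := nth_find 0 vT; rewrite nth_iota //.
by move: vT; rewrite has_find size_iota.
Qed.

Lemma connect_ball_dist_in u v : u \in S -> connect (restrict e S) u v ->
  v \in ball e S u (dist_in e S u v).
Proof.
move=> uS /connectP[p0 p0path ->]; case: (shortenP p0path) => p pp up _.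
apply: ball_dist_in; apply/hasP; exists (size p).
  by have := max_card (mem (u :: p)); rewrite mem_iota (card_uniqP up).
elim/last_ind: p pp {up} => [|q y IH]; first by rewrite ball0 uS eqxx.
rewrite rcons_path last_rcons size_rcons => /andP[qp /and3P[_ yS ey]].
exact: ball_step (IH qp) yS ey.
Qed.

Lemma dist_in_self u : u \in S -> dist_in e S u u = 0.
Proof. by move=> uS; apply/eqP; rewrite -leqn0 dist_in_le // ball0 uS eqxx. Qed.

Lemma dist_in_lipschitz u x y : x \in S -> y \in S -> e x y ->
  dist_in e S u y <= (dist_in e S u x).+1.
Proof.
move=> xS yS exy; have [xT|xT] := boolP (has (fun n => x \in ball e S u n) (iota 0 #|T|)).
  by apply: dist_in_le; apply: ball_step (ball_dist_in xT) yS exy.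
rewrite {2}/dist_in (hasNfind xT) size_iota.
by rewrite ltnW // ltnS (leq_trans (find_size _ _)) ?size_iota.
Qed.

Lemma dist_in_pred u v : u \in S -> connect (restrict e S) u v -> v != u ->
  exists w, [/\ e w v, w \in S, connect (restrict e S) u w &
                (dist_in e S u w).+1 = dist_in e S u v].
Proof.
move=> uS uv vu; have := connect_ball_dist_in uS uv.
case Duv: (dist_in e S u v) => [|d]; first by rewrite ball0 (negbTE vu) andbF.
rewrite ballS !inE => /orP[/dist_in_le|/andP[vS /existsP[w /andP[wd ewv]]]].
  by rewrite Duv ltnn.
have wS := subsetP (ball_sub u d) w wd.
exists w; split => //; first exact: ball_connect wd.
apply/eqP; rewrite eqSS eqn_leq dist_in_le //=.
by rewrite -ltnS -Duv dist_in_lipschitz.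
Qed.

Lemma dist_in_path u v : u \in S -> connect (restrict e S) u v ->
  exists2 p, path (restrict e S) u p & last u p = v /\ size p = dist_in e S u v.
Proof.
move=> uS; elim: {v}(dist_in e S u v) {-2}v (erefl (dist_in e S u v)) => [|d IH] v Dv uv.
  exists [::] => //=; split=> //; case: (eqVneq v u) => [->//|vu].
  by have [w [_ _ _]] := dist_in_pred uS uv vu; rewrite Dv.
have vu : v != u by apply: contra_eq_neq Dv => ->; rewrite dist_in_self.
have [w [ewv wS uw Dw]] := dist_in_pred uS uv vu.
have [p pp [lp sp]] : exists2 p, path (restrict e S) u p & last u p = w /\ size p = d.
  by move: Dw; rewrite Dv => -[Dw]; rewrite -Dw; apply: IH.
have vS : v \in S by case: (connect_restrict_mem uv) => // uv'; rewrite uv' eqxx in vu.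
exists (rcons p v); first by rewrite rcons_path pp lp /restrict wS vS ewv.
by rewrite last_rcons size_rcons sp Dv.
Qed.

Lemma ball_prepend u x n : u \in S -> x \in S -> e u x ->
  ball e S x n \subset ball e S u n.+1.
Proof.
move=> uS xS eux; elim: n => [|n IH]; apply/subsetP => y.
  by rewrite ball0 => /andP[_ /eqP->]; apply: ball_step eux; rewrite ?ball0 ?uS ?eqxx.
rewrite ballS in_setU => /orP[/(subsetP IH)|]; first exact: (subsetP (ball_mono _ _)).
rewrite inE => /andP[yS /existsP[z /andP[zn ezy]]].
exact: ball_step (subsetP IH z zn) yS ezy.
Qed.

Lemma ball_sym u v n : symmetric e -> v \in ball e S u n -> u \in ball e S v n.
Proof.
move=> sym; elim: n v => [|n IH] v.
  by rewrite !ball0 => /andP[vS /eqP vu]; rewrite -vu vS eqxx.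
rewrite ballS in_setU => /orP[/IH|]; first exact: (subsetP (ball_mono _ _)).
rewrite inE => /andP[vS /existsP[x /andP[xn exv]]].
have xS := subsetP (ball_sub u n) x xn.
by apply: (subsetP (ball_prepend n vS xS _)); rewrite 1?sym // IH.
Qed.

Lemma dist_in_sym u v : symmetric e -> dist_in e S u v = dist_in e S v u.
Proof. by move=> sym; apply: eq_find => n; apply/idP/idP; apply: ball_sym. Qed.

End Distances.

Section LevelFunction.
Local Open Scope nat_scope.
Variables (T : finType) (e : rel T) (r : T) (f : T -> nat).
Hypothesis f_root : f r = 0.
Hypothesis f_lipschitz : forall x y, e x y -> f y <= (f x).+1.
Hypothesis f_pred : forall v, v != r -> exists w, e w v /\ (f w).+1 = f v.

Lemma ball_level n : ball e setT r n = [set v | f v <= n].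
Proof.
elim: n => [|n IH]; apply/setP => v.
  rewrite ball0 !inE leqn0; apply/eqP/eqP => [->//|fv0].
  by apply/eqP; apply: contraT => /f_pred[w [_]]; rewrite fv0.
rewrite ballS in_setU IH !inE; apply/orP/idP => [[/leqW //|/existsP[x]]|fvn].
  by rewrite !inE => /andP[xn /f_lipschitz fv]; apply: leq_trans fv _.
have [|nfv] := leqP (f v) n; [by left | right].
have /f_pred[w [ewv Dw]] : v != r by apply: contraTneq nfv => ->; rewrite f_root.
by apply/existsP; exists w; rewrite inE ewv -ltnS Dw fvn.
Qed.

Lemma connect_level v : connect e r v.
Proof.
elim: {v}(f v) {-2}v (erefl (f v)) => [|n IH] v fv.
  have [->|/f_pred[w []]] := eqVneq v r; [exact: connect0 | by rewrite fv].
have [->|/f_pred[w [ewv]]] := eqVneq v r; first exact: connect0.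
by rewrite fv => -[/IH wn]; apply: connect_trans wn (connect1 ewv).
Qed.

Lemma dist_in_level v : dist_in e setT r v = f v.
Proof.
have rv : connect (restrict e setT) r v.
  apply: connect_sub (connect_level v) => x y exy.
  by apply: connect1; rewrite /restrict !inE.
apply/eqP; rewrite eqn_leq dist_in_le ?ball_level ?inE //.
by have := connect_ball_dist_in (in_setT r) rv; rewrite ball_level inE.
Qed.

End LevelFunction.

Section Branches.
Local Open Scope nat_scope.
Variables (T : finType) (e : rel T) (H : {set T}).
Hypotheses (e_sym : symmetric e) (e_irr : irreflexive e).
Hypothesis H2ec : two_ec_component e H.

Lemma connect_in_H (S : {set T}) x y : H \subset S -> x \in H -> y \in H ->
  connect (restrict e S) x y.
Proof.
by move=> HS xH yH; apply: connect_restrict_subset HS _; case: H2ec => -[+ _] _; apply.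
Qed.

Lemma bridgeless_add_path h c : h \in H -> last h c \in H ->
  path e h c -> uniq (h :: c) -> bridgeless_in e (H :|: [set y in c]).
Proof.
move=> hH lH hc uc; set S := H :|: [set y in c].
have HS : H \subset S := subsetUl _ _.
have cS : {subset h :: c <= S}.
  by move=> y; rewrite inE => /predU1P[->|yc]; rewrite !inE ?hH ?yc ?orbT.
have restrict_c : path (restrict e S) h c.
  by apply: path_restrict hc (cS _ _) _ => [|y yc]; rewrite ?cS // inE ?eqxx ?yc ?orbT.
split.
  have h_to y : y \in S -> connect (restrict e S) h y.
    rewrite !inE => /orP[yH|yc]; first exact: connect_in_H.
    by apply: (path_connect restrict_c); rewrite inE yc orbT.
  move=> y z yS zS; apply: connect_trans (h_to z zS).
  by rewrite (sym_connect_sym (restrict_sym S e_sym)) h_to.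
move=> a b aS bS eab; have [/andP[aH bH]|nab] := boolP ((a \in H) && (b \in H)).
  by apply: connect_restrict_subset HS _; case: H2ec => -[_ +] _; apply.
set e' := restrict (remove_edge e a b) S.
have e'_sym : connect_sym e' by apply/sym_connect_sym/restrict_sym/remove_edge_sym.
have ab : a != b by apply: contraTneq eab => ->; rewrite e_irr.
have in_H y z : y \in H -> z \in H -> connect e' y z.
  move=> yH zH; case: H2ec => -[+ _] _ => /(_ y z yH zH); apply: connect_sub.
  move=> y' z' /and3P[y'H z'H ey'z']; apply: connect1.
  rewrite /e' /restrict /remove_edge !(subsetP HS) // ey'z' /=.
  by apply: contra nab => /orP[]/andP[/eqP<- /eqP<-]; rewrite ?y'H ?z'H.
have to_H y : y \in S -> exists2 h', h' \in H & connect e' y h'.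
  rewrite !inE => /orP[yH|yc]; first by exists y.
  have /(uniq_path_avoid_edge hc uc cS ab)[hy|yl] : y \in h :: c by rewrite inE yc orbT.
    by exists h; rewrite // e'_sym.
  by exists (last h c).
have [[ha haH aha] [hb hbH bhb]] := (to_H a aS, to_H b bS).
by apply: connect_trans aha (connect_trans (in_H ha hb haH hbH) _); rewrite e'_sym.
Qed.

(* Otherwise H together with the path would be a larger bridgeless subgraph. *)
Lemma no_H_detour h1 h2 p : h1 \in H -> h2 \in H -> h1 != h2 ->
  path e h1 p -> uniq (h1 :: p) -> {subset p <= ~: H} -> p != [::] ->
  e (last h1 p) h2 -> False.
Proof.
move=> h1H h2H h12 h1p up pH p0 eh2.
have xp : last h1 p \in p by case: p p0 {h1p up pH eh2} => // y p _; rewrite /= mem_last.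
have xH : last h1 p \notin H by have := pH _ xp; rewrite inE.
have h2p : h2 \notin h1 :: p.
  by rewrite inE negb_or eq_sym h12; apply: contraL h2H => /pH; rewrite inE.
have c_path : path e h1 (rcons p h2) by rewrite rcons_path h1p eh2.
have c_uniq : uniq (h1 :: rcons p h2) by rewrite -rcons_cons rcons_uniq h2p up.
have c_end : last h1 (rcons p h2) \in H by rewrite last_rcons.
have := bridgeless_add_path h1H c_end c_path c_uniq.
move/(H2ec.2 _ (subsetUl _ _))/setP/(_ (last h1 p)).
by rewrite !inE mem_rcons inE xp orbT (negbTE xH).
Qed.

Lemma branch_self h : h \in Tset e H h.
Proof. by rewrite inE connect0. Qed.

Lemma branch_inH h v : v \in Tset e H h -> v \in H -> v = h.
Proof.
rewrite inE => /connect_restrict_mem[->//|]; rewrite !inE.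
by case/orP=> [/negbTE->//|/eqP->].
Qed.

Lemma branch_closed h v w : v \in Tset e H h -> w \notin H -> e v w ->
  w \in Tset e H h.
Proof.
move=> hv wH evw; have vS : v \in ~: H :|: [set h].
  rewrite !inE orbC; case: eqVneq => [//|vh] /=.
  by apply: contra vh => /(branch_inH hv)->.
rewrite !inE in hv *; apply: connect_trans hv (connect1 _).
by rewrite /restrict vS !inE wH evw.
Qed.

Lemma branch_boundary h x y : h \in H -> x \in Tset e H h -> y \notin Tset e H h ->
  e x y -> x = h /\ y \in H.
Proof.
move=> hH hx hy exy.
have yH : y \in H by apply: contraR hy => yH; apply: branch_closed hx yH exy.
split=> //; apply/eqP; apply: contraT => xh; exfalso.
have xH : x \notin H by apply: contra xh => /(branch_inH hx)->.
move: hx; rewrite !inE => /connectP[p0 p0path Dx]; rewrite {x}Dx in xh xH exy.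
case: (shortenP p0path) xh xH exy => p pp up _ xh xH exy.
apply: (no_H_detour hH yH _ (path_unrestrict pp) up) => //.
- by apply: contra hy => /eqP<-; apply: branch_self.
- move=> z zp; have := path_restrict_mem pp zp; rewrite !inE.
  by case/orP=> // /eqP zh; move: up; rewrite /= -zh zp.
- by apply: contra xh => /eqP->.
Qed.

Lemma branch_disjoint h1 h2 v : h1 \in H -> h2 \in H ->
  v \in Tset e H h1 -> v \in Tset e H h2 -> h1 = h2.
Proof.
move=> h1H h2H v1 v2; apply/eqP; apply: contraT => h12.
have h2T : h2 \notin Tset e H h1.
  by apply: contra h12 => /branch_inH/(_ h2H)->.
have v_h2 : connect (restrict e (~: H :|: [set h2])) v h2.
  by rewrite (sym_connect_sym (restrict_sym _ e_sym)); rewrite inE in v2.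
have [z [w [_ zT wT /and3P[zS _ ezw]]]] := connect_exit v_h2 v1 h2T.
have [zh1 _] := branch_boundary h1H zT wT ezw.
by rewrite zh1 !inE h1H (negbTE h12) in zS.
Qed.

End Branches.

Lemma adj_sym (T : finType) (s : strategy T) : symmetric (adj s).
Proof. by move=> x y; rewrite /adj orbC. Qed.

Lemma adj_irr (T : finType) (s : strategy T) : valid_strategy s -> irreflexive (adj s).
Proof. by move=> sv x; rewrite /adj orbb; apply/negbTE. Qed.

Lemma sum_index_eq m n j : \sum_(m <= l < n) (l == j) = (m <= j < n).
Proof.
rewrite (eq_bigr (fun l => if l == j then 1 else 0)) => [|l _]; last by case: eqP.
by rewrite -big_mkcond sum1_count count_uniq_mem ?iota_uniq // mem_index_iota.
Qed.

Lemma sum_mem_card (T : finType) (A : {set T}) : \sum_v (v \in A) = #|A|.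
Proof. by rewrite -sum1_card [RHS]big_mkcond; apply: eq_bigr => v _; case: (v \in A). Qed.

Definition add_edge (T : finType) (e : rel T) (a b : T) : rel T :=
  fun x y => [|| e x y, (x == a) && (y == b) | (x == b) && (y == a)].

Section TwoPath.
Local Open Scope nat_scope.
Variables (T : finType) (s : strategy T) (H : {set T}) (k : nat) (u : nat -> T).
Hypothesis s_valid : valid_strategy s.
Hypothesis H2ec : two_ec_component (adj s) H.
Hypothesis u2path : two_path s H k u.
Hypothesis u_buys : forall j, j < k -> u j.+1 \in s (u j).
Hypothesis G_girth : girth_ge (adj s) (2 * k).
Hypothesis k_ge2 : 2 <= k.
Hypothesis G_connected : forall x y, connect (adj s) x y.

Local Notation E := (adj s).
Local Notation br j := (Tset (adj s) H (u j)).

Lemma u_in_H j : j <= k -> u j \in H.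
Proof. by case: u2path => + _ _ _; apply. Qed.

Lemma u_eq j l : j <= k -> l <= k -> (u j == u l) = (j == l).
Proof.
by case: u2path => _ uinj _ _ jk lk; apply/eqP/eqP => [/uinj|->]; last by []; apply.
Qed.

Lemma u_adj j : j < k -> E (u j) (u j.+1).
Proof. by move=> jk; rewrite /adj u_buys. Qed.

Lemma u_adj_near j l : j <= k -> l <= k -> (l == j.+1) || (j == l.+1) -> E (u j) (u l).
Proof.
move=> jk lk /orP[]/eqP D; rewrite D; [|rewrite adj_sym]; apply: u_adj; lia.
Qed.

Lemma interior_out_arc j y : 0 < j < k -> y \in H -> y \in s (u j) -> y = u j.+1.
Proof.
case: u2path => _ _ _ deg /[dup] jk /deg[_ /eqP/cards1P[z Dz]] yH yj.
have: u j.+1 \in [set v in H | v \in s (u j)] by rewrite inE u_in_H ?u_buys //; lia.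
by rewrite Dz inE => /eqP->; apply/set1P; rewrite -Dz inE yH.
Qed.

Lemma interior_in_arc j y : 0 < j < k -> y \in H -> u j \in s y -> y = u j.-1.
Proof.
case: u2path => _ _ _ deg /[dup] jk /deg[/eqP/cards1P[z Dz] _] yH yj.
have: u j.-1 \in [set v in H | u j \in s v].
  by case: j jk {Dz yj} => // j jk; rewrite inE u_in_H ?u_buys //; lia.
by rewrite Dz inE => /eqP->; apply/set1P; rewrite -Dz inE yH.
Qed.

Lemma interior_neighbor j y : 0 < j < k -> y \in H -> E (u j) y ->
  y = u j.-1 \/ y = u j.+1.
Proof.
move=> jk yH /orP[/(interior_out_arc jk yH)|/(interior_in_arc jk yH)]; by [right | left].
Qed.

Lemma no_back_arc j : 0 < j < k -> u j.-1 \notin s (u j).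
Proof.
move=> jk; apply/negP => /(interior_out_arc jk (u_in_H _)) /eqP.
by rewrite u_eq; lia.
Qed.

Lemma interior_branch_boundary j x y : 0 < j < k -> x \in br j -> y \notin br j ->
  E x y -> x = u j /\ (y = u j.-1 \/ y = u j.+1).
Proof.
move=> jk xb yb exy; have jk' : j <= k by lia.
have [xj yH] := branch_boundary (adj_sym s) (adj_irr s_valid) H2ec (u_in_H jk') xb yb exy.
by split=> //; apply: interior_neighbor => //; rewrite -xj.
Qed.

Lemma path_branch_disjoint j l v : j <= k -> l <= k -> v \in br j -> v \in br l -> j = l.
Proof.
move=> jk lk vj vl; apply/eqP; rewrite -u_eq //.
have := branch_disjoint (adj_sym s) (adj_irr s_valid) H2ec (u_in_H jk) (u_in_H lk) vj vl.
by move->.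
Qed.

Local Notation P := (pibar s H k u).

Lemma pibarP v : reflect (exists2 j, 0 < j < k & v \in br j) (v \in P).
Proof.
apply: (iffP bigcupP) => [[j j0 vj]|[j /andP[j0 jk] vj]]; last by exists (Ordinal jk).
by exists j; rewrite ?j0 ?ltn_ord.
Qed.

Lemma u_in_pibar j : j <= k -> (u j \in P) = (0 < j < k).
Proof.
move=> jk; apply/pibarP/idP => [[l lk /branch_inH]|]; last first.
  by exists j => //; apply: branch_self.
by rewrite u_in_H // => /(_ isT)/eqP; rewrite u_eq //; try lia; move/eqP->.
Qed.

Definition branch_index v :=
  if [pick j : 'I_k | (0 < j) && (v \in br j)] is Some j then val j else 0.

Lemma branch_indexE j v : 0 < j < k -> v \in br j -> branch_index v = j.
Proof.
move=> /andP[j0 jk] vj; rewrite /branch_index.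
case: pickP => [l /andP[_ vl]|/(_ (Ordinal jk))]; last by rewrite /= vj j0.
by apply: path_branch_disjoint vl vj; [apply: ltnW | lia].
Qed.

Lemma branch_indexP v : v \in P ->
  0 < branch_index v < k /\ v \in br (branch_index v).
Proof. by case/pibarP=> j jk vj; rewrite (branch_indexE jk vj). Qed.

Lemma pibar_boundary x y : x \notin P -> y \in P -> E x y ->
  (x = u 0 /\ y = u 1) \/ (x = u k /\ y = u k.-1).
Proof.
move=> xP /pibarP[j jk yj] exy.
have xj : x \notin br j by apply: contra xP => xj; apply/pibarP; exists j.
have [Dy [Dx|Dx]] := interior_branch_boundary jk yj xj (etrans (adj_sym s y x) exy).
  have j1 : j = 1.
    by apply: contraNeq xP => j1; rewrite Dx u_in_pibar; lia.
  by left; rewrite Dx Dy j1.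
have jk1 : j = k.-1 by apply: contraNeq xP => jk1; rewrite Dx u_in_pibar; lia.
by right; rewrite Dx Dy jk1 prednK //; lia.
Qed.

Lemma adj_cases x y : E x y ->
  [\/ exists2 j, 0 < j < k & x \in br j /\ y \in br j,
      exists j l, [/\ j <= k, l <= k, x = u j, y = u l & (l == j.+1) || (j == l.+1)]
    | x \notin P /\ y \notin P].
Proof.
move=> exy; have eyx : E y x by rewrite adj_sym.
have [xP|xP] := boolP (x \in P); have [yP|yP] := boolP (y \in P).
- have [jk xj] := branch_indexP xP; set j := branch_index x in jk xj.
  have [yj|yj] := boolP (y \in br j); first by apply: Or31; exists j.
  have [Dx Dy] := interior_branch_boundary jk xj yj exy.
  by apply: Or32; exists j; case: Dy => Dy; [exists j.-1 | exists j.+1]; split=> //; lia.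
- apply: Or32; case: (pibar_boundary yP xP eyx) => -[-> ->].
    by exists 1, 0; split=> //; lia.
  by exists k.-1, k; split=> //; lia.
- apply: Or32; case: (pibar_boundary xP yP exy) => -[-> ->].
    by exists 0, 1; split=> //; lia.
  by exists k, k.-1; split=> //; lia.
- exact: Or33.
Qed.

Lemma u0_out : u 0 \notin P. Proof. by rewrite u_in_pibar. Qed.
Lemma uk_out : u k \notin P. Proof. by rewrite u_in_pibar // ltnn andbF. Qed.
Lemma u1_in : u 1 \in P. Proof. by rewrite u_in_pibar //; lia. Qed.

Lemma connect_out_ends : connect (restrict E (~: P)) (u 0) (u k).
Proof.
case: H2ec => -[_ bridgeless] _.
have := bridgeless _ _ (u_in_H (leq0n k)) (u_in_H (ltnW k_ge2)) (u_adj (ltnW k_ge2)).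
move/connect_exit => /(_ (~: P)); rewrite !inE u0_out u1_in.
case=> // z [w [u0z zQ wQ /and3P[_ _ /andP[ezw not01]]]].
rewrite !inE negbK in zQ wQ.
have [[Dz Dw]|[Dz _]] := pibar_boundary zQ wQ ezw; last first.
  rewrite -Dz; apply: connect_sub u0z => a b /and3P[aQ bQ /and3P[_ _ /andP[eab _]]].
  by apply: connect1; rewrite /restrict aQ bQ.
by rewrite Dz Dw !eqxx in not01.
Qed.

Lemma connect_out v : v \notin P -> connect (restrict E (~: P)) (u 0) v.
Proof.
move=> vP; have Qsym := sym_connect_sym (restrict_sym (~: P) (adj_sym s)).
have := connect_exit (G_connected v (u 1)) (_ : v \in ~: P); rewrite !inE u1_in.
case=> // z [w [vz zQ wQ ezw]]; rewrite !inE negbK in zQ wQ.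
rewrite Qsym; apply: connect_trans vz _; rewrite Qsym.
by case: (pibar_boundary zQ wQ ezw) => -[Dz _]; rewrite Dz ?connect0 ?connect_out_ends.
Qed.

Lemma path_along_u n : n <= k ->
  path E (u 0) (map u (iota 1 n)) /\ last (u 0) (map u (iota 1 n)) = u n.
Proof.
elim: n => [|n IH] nk //; have [un lun] := IH (ltnW nk).
rewrite -[n.+1]addn1 iotaD map_cat cat_path last_cat lun /= add1n un.
by rewrite u_adj ?addn1.
Qed.

(* The path u_1 ... u_k followed by a shortest path back to u_0 outside the
   interior is a cycle of length k + x_1(u_0), so the girth bound applies. *)
Lemma out_dist_ends : k <= dist_in E (~: P) (u k) (u 0).
Proof.
have ukQ : u k \in ~: P by rewrite inE uk_out.
have conn : connect (restrict E (~: P)) (u k) (u 0).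
  by rewrite (sym_connect_sym (restrict_sym _ (adj_sym s))) connect_out_ends.
have [p0 p0p [+ <-]] := dist_in_path ukQ conn.
case: (shortenP p0p) => q qp; rewrite cons_uniq => /andP[ukq uq] sub lq.
apply: leq_trans (uniq_leq_size uq sub).
have [uk_path lu] := path_along_u (leqnn k).
set c := map u (iota 1 k) ++ q.
have cyc : cycle E c.
  rewrite (cycle_path (u 0)) /c last_cat lu lq cat_path uk_path lu.
  exact: path_unrestrict qp.
have qQ := path_restrict_mem qp.
have uc : uniq c.
  rewrite cat_uniq uq andbT map_inj_in_uniq ?iota_uniq; last first.
    by move=> a b; rewrite !mem_iota => ak bk /eqP; rewrite u_eq; [move/eqP | lia | lia].
  apply/hasP => -[y yq /mapP[t]]; rewrite mem_iota => tk Dy.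
  have [tk'|tk'] := ltnP t k.
    by have := qQ y yq; rewrite Dy inE u_in_pibar; lia.
  have tk2 : t = k by lia.
  by rewrite -tk2 -Dy yq in ukq.
have q0 : 0 < size q.
  rewrite lt0n size_eq0; apply/eqP => q_nil; move: lq; rewrite q_nil => /eqP.
  by rewrite u_eq //; lia.
have size_c : size c = k + size q by rewrite /c size_cat size_map size_iota.
have /G_girth : 2 < size c by rewrite size_c; lia.
by move=> /(_ uc cyc); rewrite size_c; lia.
Qed.

Definition branch_dist j v := dist_in E (~: H :|: [set u j]) (u j) v.
(* [dist0 v] and [distk v] are x_2(v) and x_1(v), distances being symmetric. *)
Definition dist0 v := dist_in E (~: P) (u 0) v.
Definition distk v := dist_in E (~: P) (u k) v.

(* [h j] is meant to be the distance from u_i to u_j along the path. *)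
Definition dist_formula (h : nat -> nat) v :=
  if v \in P then h (branch_index v) + branch_dist (branch_index v) v
  else minn (h 0 + dist0 v) (h k + distk v).

Lemma branch_sub j v : v \in br j -> v \in ~: H :|: [set u j].
Proof. by rewrite inE => /connect_restrict_mem[->|//]; rewrite !inE eqxx orbT. Qed.

Lemma formula_branch h j v : 0 < j < k -> v \in br j ->
  dist_formula h v = h j + branch_dist j v.
Proof.
move=> jk vj; have vP : v \in P by apply/pibarP; exists j.
by rewrite /dist_formula vP (branch_indexE jk vj).
Qed.

Lemma formula_out h v : v \notin P ->
  dist_formula h v = minn (h 0 + dist0 v) (h k + distk v).
Proof. by rewrite /dist_formula => /negbTE->. Qed.

Lemma formula_u h j : h 0 <= h k + k -> h k <= h 0 + k -> j <= k ->
  dist_formula h (u j) = h j.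
Proof.
move=> h0k hk0 jk; have ends := out_dist_ends.
have [u0Q ukQ] : u 0 \in ~: P /\ u k \in ~: P by rewrite !inE u0_out uk_out.
have [->|j0] := posnP j.
  by rewrite formula_out ?u0_out // /dist0 /distk dist_in_self //; lia.
have [->|jk'] := eqVneq j k.
  rewrite formula_out ?uk_out // /dist0 /distk (dist_in_sym _ (u 0) _ (adj_sym s)).
  by rewrite dist_in_self //; lia.
rewrite (formula_branch _ (_ : 0 < j < k) (branch_self _ _ _)); last lia.
by rewrite /branch_dist dist_in_self ?addn0 // !inE eqxx orbT.
Qed.

Lemma formula_lipschitz_branch h j x y : 0 < j < k -> x \in br j -> y \in br j -> E x y ->
  dist_formula h y <= (dist_formula h x).+1.
Proof.
move=> jk xj yj exy; rewrite !(formula_branch _ jk) // -addnS leq_add2l.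
exact: dist_in_lipschitz (branch_sub xj) (branch_sub yj) exy.
Qed.

Lemma formula_lipschitz_out h x y : x \notin P -> y \notin P -> E x y ->
  dist_formula h y <= (dist_formula h x).+1.
Proof.
move=> xP yP exy; rewrite !formula_out //.
have xQ : x \in ~: P by rewrite inE.
have yQ : y \in ~: P by rewrite inE.
have := dist_in_lipschitz (u 0) xQ yQ exy; have := dist_in_lipschitz (u k) xQ yQ exy.
rewrite /dist0 /distk; lia.
Qed.

Lemma formula_pred_branch h j v : 0 < j < k -> v \in br j -> v != u j ->
  exists w, [/\ E w v, w \in br j & (dist_formula h w).+1 = dist_formula h v].
Proof.
move=> jk vj vu; have ujS : u j \in ~: H :|: [set u j] by rewrite !inE eqxx orbT.
have ujv : connect (restrict E (~: H :|: [set u j])) (u j) v by rewrite inE in vj.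
have [w [ewv _ ujw Dw]] := dist_in_pred ujS ujv vu.
have wj : w \in br j by rewrite inE.
by exists w; split => //; rewrite !(formula_branch _ jk) // -addnS Dw.
Qed.

Lemma formula_pred_out h v : v \notin P -> v != u 0 -> v != u k ->
  exists w, [/\ E w v, w \notin P & (dist_formula h w).+1 = dist_formula h v].
Proof.
move=> vP v0 vk; have Qsym := sym_connect_sym (restrict_sym (~: P) (adj_sym s)).
have [u0Q ukQ] : u 0 \in ~: P /\ u k \in ~: P by rewrite !inE u0_out uk_out.
have lift w : E w v -> w \in ~: P -> dist_formula h w < dist_formula h v ->
    (dist_formula h w).+1 = dist_formula h v.
  move=> ewv; rewrite inE => wP; have := formula_lipschitz_out h wP vP ewv; lia.
have [le0k|lek0] := leqP (h 0 + dist0 v) (h k + distk v).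
  have [w [ewv wQ _ Dw]] := dist_in_pred u0Q (connect_out vP) v0.
  have wP : w \notin P by rewrite inE in wQ.
  exists w; split => //; apply: lift => //; rewrite !formula_out //.
  by have := geq_minl (h 0 + dist0 w) (h k + distk w); rewrite /dist0 -Dw in le0k *; lia.
have ukv : connect (restrict E (~: P)) (u k) v.
  by apply: connect_trans (connect_out vP); rewrite Qsym connect_out_ends.
have [w [ewv wQ _ Dw]] := dist_in_pred ukQ ukv vk.
have wP : w \notin P by rewrite inE in wQ.
exists w; split => //; apply: lift => //; rewrite !formula_out //.
by have := geq_minr (h 0 + dist0 w) (h k + distk w); rewrite /distk -Dw in lek0 *; lia.
Qed.

Lemma formula_pred (e' : rel T) h r : h 0 <= h k + k -> h k <= h 0 + k ->
  (forall j, j <= k -> u j != r -> exists w, e' w (u j) /\ (dist_formula h w).+1 = h j) ->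
  (forall j x y, 0 < j < k -> x \in br j -> y \in br j -> E x y -> e' x y) ->
  (forall x y, x \notin P -> y \notin P -> E x y -> e' x y) ->
  forall v, v != r -> exists w, e' w v /\ (dist_formula h w).+1 = dist_formula h v.
Proof.
move=> h0k hk0 on_path in_branch out v vr.
have path_case j : j <= k -> v = u j ->
    exists w, e' w v /\ (dist_formula h w).+1 = dist_formula h v.
  by move=> jk Dv; rewrite Dv formula_u //; apply: on_path; rewrite // -Dv.
have [vP|vP] := boolP (v \in P).
  have [jk vj] := branch_indexP vP; set j := branch_index v in jk vj.
  have [Dv|vu] := eqVneq v (u j); first by apply: (path_case j) => //; lia.
  have [w [ewv wj Dw]] := formula_pred_branch h jk vj vu.
  by exists w; split=> //; apply: in_branch wj vj _.
have [Dv|v0] := eqVneq v (u 0); first exact: (path_case 0).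
have [Dv|vk] := eqVneq v (u k); first exact: (path_case k).
by have [w [ewv wP Dw]] := formula_pred_out h vP v0 vk; exists w; split=> //; apply: out.
Qed.

Section Swap.
Variable i : nat.
Hypothesis i_lt : i.+2 <= k.

Local Notation E' := (adj (swap2 s u i)).

Lemma no_triangle : u i.+2 \notin s (u i).
Proof.
apply/negP => tri; have c3 : cycle E [:: u i; u i.+1; u i.+2].
  by rewrite /= !u_adj //= ?andbT ?/adj ?tri ?orbT //; lia.
have uc : uniq [:: u i; u i.+1; u i.+2].
  by rewrite /= !inE !u_eq ?andbT; lia.
by have := G_girth (isT : 2 < size [:: u i; u i.+1; u i.+2]) uc c3; rewrite /=; lia.
Qed.

Lemma adj_swap2 : E' =2 add_edge (remove_edge E (u i) (u i.+1)) (u i) (u i.+2).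
Proof.
have [ne01 ne02] : u i != u i.+1 /\ u i != u i.+2 by rewrite !u_eq; try split; lia.
have back : u i \notin s (u i.+1) by have := @no_back_arc i.+1; apply; lia.
move=> x y; rewrite /adj /swap2 /update /add_edge /remove_edge !ffunE.
case: (eqVneq x (u i)) => [->|xi]; case: (eqVneq y (u i)) => [->|yi] /=.
- by rewrite !inE (negbTE (s_valid _)) (negbTE ne01) (negbTE ne02).
- rewrite !inE; case: (eqVneq y (u i.+2)) => [->|y2] /=; first by rewrite ?eqxx !orbT.
  case: (eqVneq y (u i.+1)) => [->|y1] /=;
    by rewrite ?(negbTE back) !andbF /= ?andbT ?orbF.
- rewrite !inE; case: (eqVneq x (u i.+2)) => [->|x2] /=; first by rewrite ?eqxx !orbT.
  case: (eqVneq x (u i.+1)) => [->|x1] /=;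
    by rewrite ?(negbTE back) ?andbF /= ?andbT ?orbF.
- by rewrite !andbF /= andbT orbF.
Qed.

Local Notation old_edge := (remove_edge E (u i) (u i.+1)).

Lemma old_edge_u j l : j <= k -> l <= k -> old_edge (u j) (u l) =
  E (u j) (u l) && ~~ (((j == i) && (l == i.+1)) || ((j == i.+1) && (l == i))).
Proof. by move=> jk lk; rewrite /remove_edge !u_eq //; lia. Qed.

Lemma old_edge_branch j x y : x \in br j -> y \in br j -> old_edge x y = E x y.
Proof.
move=> xj yj; rewrite /remove_edge; case: (E x y) => //=; apply/negP.
have inH l : l <= k -> u l \in br j -> u l = u j.
  by move=> lk /branch_inH; apply; apply: u_in_H.
have ne : u i != u i.+1 by rewrite u_eq; lia.
case/orP=> /andP[/eqP Dx /eqP Dy]; rewrite Dx Dy in xj yj; move: ne.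
  by rewrite (inH i _ xj) ?(inH i.+1 _ yj) ?eqxx //; lia.
by rewrite (inH i _ yj) ?(inH i.+1 _ xj) ?eqxx //; lia.
Qed.

Lemma old_edge_out x y : x \notin P -> y \notin P -> old_edge x y = E x y.
Proof.
move=> xP yP; rewrite /remove_edge; case: (E x y) => //=; apply/negP.
have ui1 : u i.+1 \in P by rewrite u_in_pibar; lia.
by case/orP=> /andP[/eqP Dx /eqP Dy]; [rewrite Dy ui1 in yP | rewrite Dx ui1 in xP].
Qed.

Definition path_dist j := (i - j) + (j - i).

(* After the swap u_(i+1) is reached through u_(i+2). *)
Definition swapped_path_dist j :=
  if j <= i then i - j else if j == i.+1 then 2 else j - i - 1.

Local Notation d_before := (dist_formula path_dist).
Local Notation d_after := (dist_formula swapped_path_dist).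

Lemma swapped_path_dist_le j : j <= i -> swapped_path_dist j = i - j.
Proof. by rewrite /swapped_path_dist => ->. Qed.

Lemma swapped_path_dist_next : swapped_path_dist i.+1 = 2.
Proof. by rewrite /swapped_path_dist ltnn eqxx. Qed.

Lemma swapped_path_dist_gt j : i.+1 < j -> swapped_path_dist j = j - i - 1.
Proof. by move=> ij; rewrite /swapped_path_dist !ifF //; lia. Qed.

Lemma formula_path_dist_u j : j <= k -> d_before (u j) = path_dist j.
Proof. by apply: formula_u; rewrite /path_dist; lia. Qed.

Lemma formula_swapped_path_dist_u j : j <= k ->
  d_after (u j) = swapped_path_dist j.
Proof.
have [ki ki1] : (k <= i) = false /\ (k == i.+1) = false by split; lia.
by apply: formula_u; rewrite /swapped_path_dist leq0n ki ki1; lia.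
Qed.

Lemma dist_before_swap v : dist s (u i) v = d_before v.
Proof.
have ik : i <= k by lia.
apply: dist_in_level => [|x y exy|].
- by rewrite formula_path_dist_u // /path_dist subnn.
- case: (adj_cases exy) => [[j jk [xj yj]]|[j [l [jk lk -> -> jl]]]|[xP yP]].
  + exact: formula_lipschitz_branch jk xj yj exy.
  + by rewrite !formula_path_dist_u // /path_dist; lia.
  + exact: formula_lipschitz_out.
apply: formula_pred => [||j jk|j x y _ _ _ //|x y _ _ //]; rewrite /path_dist; try lia.
rewrite u_eq // => ji; have [ij|ji'] := ltnP i j.
  exists (u j.-1); rewrite formula_path_dist_u /path_dist; last lia.
  by split; [apply: u_adj_near | ]; lia.
exists (u j.+1); rewrite formula_path_dist_u /path_dist; last lia.
by split; [apply: u_adj_near | ]; lia.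
Qed.

Lemma swapped_lipschitz x y : E' x y ->
  d_after y <= (d_after x).+1.
Proof.
have [ik i2k] : i <= k /\ i.+2 <= k by split; lia.
rewrite adj_swap2 /add_edge => /or3P[oxy|/andP[/eqP-> /eqP->]|/andP[/eqP-> /eqP->]];
  last 2 first.
- rewrite !formula_swapped_path_dist_u // swapped_path_dist_gt //.
  by rewrite swapped_path_dist_le //; lia.
- rewrite !formula_swapped_path_dist_u // swapped_path_dist_le //.
  by rewrite swapped_path_dist_gt //; lia.
have exy : E x y by case/andP: oxy.
case: (adj_cases exy) => [[j jk [xj yj]]|[j [l [jk lk Dx Dy jl]]]|[xP yP]].
- exact: formula_lipschitz_branch jk xj yj exy.
- move: oxy; rewrite Dx Dy old_edge_u // !formula_swapped_path_dist_u // => /andP[_].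
  rewrite /swapped_path_dist; case: (leqP l i) => ?; case: (leqP j i) => ?;
    by case: (eqVneq l i.+1) => ?; case: (eqVneq j i.+1) => ?; lia.
- exact: formula_lipschitz_out.
Qed.

Lemma swapped_pred v : v != u i ->
  exists w, E' w v /\ (d_after w).+1 = d_after v.
Proof.
have keep x y : old_edge x y -> E' x y by move=> oxy; rewrite adj_swap2 /add_edge oxy.
have keep_u j l : j <= k -> l <= k -> (l == j.+1) || (j == l.+1) ->
    ~~ (((j == i) && (l == i.+1)) || ((j == i.+1) && (l == i))) -> E' (u j) (u l).
  by move=> jk lk jl old; apply: keep; rewrite old_edge_u // old andbT u_adj_near.
have g_u j : j <= k -> d_after (u j) = swapped_path_dist j.
  exact: formula_swapped_path_dist_u.
have [ki ki1] : (k <= i) = false /\ (k == i.+1) = false by split; lia.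
apply: formula_pred => [||j jk|j x y _ xj yj exy|x y xP yP exy].
- by rewrite /swapped_path_dist leq0n ki ki1; lia.
- by rewrite /swapped_path_dist leq0n ki ki1; lia.
- rewrite u_eq; [move=> ji | lia | lia]; have [ji'|ij] := ltnP j i.
    exists (u j.+1); rewrite g_u ?swapped_path_dist_le; try lia.
    by split; [apply: keep_u | ]; lia.
  have [->|j1] := eqVneq j i.+1.
    exists (u i.+2); rewrite g_u // swapped_path_dist_next swapped_path_dist_gt //.
    by split; [apply: keep_u | ]; lia.
  have [->|j2] := eqVneq j i.+2.
    exists (u i); rewrite g_u; last lia.
    rewrite (swapped_path_dist_le (leqnn i)) swapped_path_dist_gt //.
    by split; [rewrite adj_swap2 /add_edge !eqxx /= orbT | ]; lia.
  exists (u j.-1); rewrite g_u ?swapped_path_dist_gt; try lia.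
  by split; [apply: keep_u | ]; lia.
- by apply: keep; rewrite (old_edge_branch xj yj).
- by apply: keep; rewrite old_edge_out.
Qed.

Lemma dist_after_swap v : dist (swap2 s u i) (u i) v = d_after v.
Proof.
apply: (dist_in_level _ swapped_lipschitz swapped_pred).
by rewrite formula_swapped_path_dist_u ?swapped_path_dist_le ?subnn //; lia.
Qed.

Lemma connect_after_swap v : connect E' (u i) v.
Proof. exact: (@connect_level _ _ (u i) d_after swapped_pred). Qed.

Lemma card_swap2 : #|swap2 s u i (u i)| = #|s (u i)|.
Proof.
rewrite /swap2 /update ffunE eqxx setUC cardsU1 (cardsD1 (u i.+1) (s (u i))).
by rewrite u_buys ?inE ?(negbTE no_triangle) ?andbF //; lia.
Qed.

Definition closer_to_uk :=
  [set v | (v \notin P) && (x1 s H k u v + (k - i) <= x2 s H k u v + i)].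

Lemma swap_pointwise v :
  d_after v + \sum_(i.+2 <= j < k) (v \in br j) + (v \in closer_to_uk) =
  d_before v + (v \in br i.+1).
Proof.
have [vP|vP] := boolP (v \in P).
  have [jk vj] := branch_indexP vP; set j := branch_index v in jk vj.
  have vl l : 0 < l < k -> (v \in br l) = (l == j).
    move=> lk; apply/idP/eqP => [vl|->//].
    by apply: path_branch_disjoint vl vj; lia.
  have -> : v \in closer_to_uk = false by rewrite inE vP.
  rewrite (vl i.+1) ?(formula_branch _ jk vj); last lia.
  rewrite (eq_big_nat _ _ (F2 := fun l => nat_of_bool (l == j))) => [|l /andP[il lk]].
    rewrite sum_index_eq /path_dist /swapped_path_dist.
    by case: (leqP j i) => ?; case: eqVneq => ?; lia.
  by rewrite vl //; lia.
have vl l : 0 < l < k -> (v \in br l) = false.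
  by move=> lk; apply: contraNF vP => vl; apply/pibarP; exists l.
rewrite big1_seq => [|l /andP[_]]; last first.
  by rewrite mem_index_iota => lk; rewrite vl //; lia.
rewrite vl; last lia.
rewrite !formula_out // inE vP /= /x1 /x2 !(dist_in_sym _ v _ (adj_sym s)).
rewrite -/(dist0 v) -/(distk v).
have [ki ki1] : (k <= i) = false /\ (k == i.+1) = false by split; lia.
by rewrite /path_dist /swapped_path_dist leq0n ki ki1; case: leqP; lia.
Qed.

Lemma swap_sum :
  \sum_v d_after v + \sum_(i.+2 <= j < k) #|br j| + #|closer_to_uk| =
  \sum_v d_before v + #|br i.+1|.
Proof.
have -> : \sum_(i.+2 <= j < k) #|br j| = \sum_v \sum_(i.+2 <= j < k) (v \in br j).
  by rewrite exchange_big; apply: eq_bigr => j _; rewrite sum_mem_card.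
have : \sum_v (d_after v + \sum_(i.+2 <= j < k) (v \in br j)
                + (v \in closer_to_uk)) = \sum_v (d_before v + (v \in br i.+1)).
  by apply: eq_bigr => v _; exact: swap_pointwise.
by rewrite !big_split /= !sum_mem_card.
Qed.

Lemma sum_dist_swap :
  \sum_(v | v != u i) dist (swap2 s u i) (u i) v + \sum_(i.+2 <= j < k) #|br j|
    + Nset s H k u i =
  \sum_(v | v != u i) dist s (u i) v + #|br i.+1|.
Proof.
have drop_root (f : T -> nat) : f (u i) = 0 -> \sum_(v | v != u i) f v = \sum_v f v.
  by move=> f0; rewrite [RHS](bigD1 (u i)) //= f0.
rewrite (eq_bigr _ (fun v _ => dist_after_swap v)).
rewrite (eq_bigr _ (fun v _ => dist_before_swap v)) !drop_root; first exact: swap_sum.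
- by rewrite formula_path_dist_u /path_dist ?subnn //; lia.
- by rewrite formula_swapped_path_dist_u ?swapped_path_dist_le ?subnn //; lia.
Qed.

Lemma swap2_cost_terms :
  [/\ forall v, connect E' (u i) v, #|swap2 s u i (u i)| = #|s (u i)| &
      \sum_(v | v != u i) dist (swap2 s u i) (u i) v + \sum_(i.+2 <= j < k) #|br j|
        + Nset s H k u i = \sum_(v | v != u i) dist s (u i) v + #|br i.+1|].
Proof.
by split; [exact: connect_after_swap | exact: card_swap2 | exact: sum_dist_swap].
Qed.

End Swap.

End TwoPath.

Lemma NE_connected (R : realType) (alpha : R) (T : finType) (s : strategy T) :
  is_NE alpha s -> forall x y, connect (adj s) x y.
Proof.
move=> [_ NE] x y; have [/forallP//|not_conn] := boolP [forall v, connect (adj s) x v].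
have x_out : x \notin [set: T] :\ x by rewrite !inE eqxx.
have := NE x _ x_out; rewrite /lt_cost /cost (negbTE not_conn) ifT //.
apply/forallP => w; have [->|wx] := eqVneq w x; first exact: connect0.
by apply: connect1; rewrite /adj /update ffunE eqxx !inE wx.
Qed.

Local Open Scope ring_scope.

Theorem lemma1 (T : finType) (R : realType) (alpha : R) (s : strategy T)
  (H : {set T}) (k : nat) (u : nat -> T) :
  0 < alpha ->
  is_NE alpha s ->
  two_ec_component (adj s) H -> (3 <= #|H|)%N ->
  two_path s H k u ->
  (forall i, (i < k)%N -> u i.+1 \in s (u i)) ->
  girth_ge (adj s) (2 * k) ->
  forall i, (i.+2 <= k)%N ->
  exists c : R,
    cost alpha s (u i) = Some c /\
    cost alpha (swap2 s u i) (u i) =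
      Some (c + ((#|Tset (adj s) H (u i.+1)|)%:R
                 - \sum_(i.+2 <= j < k) (#|Tset (adj s) H (u j)|)%:R
                 - (Nset s H k u i)%:R)).
Proof.
(* The equilibrium is only used through the connectivity of G. *)
move=> _ NE H2ec _ u2path u_buys G_girth i ik.
have s_valid : valid_strategy s by case: NE.
have k_ge2 : (2 <= k)%N by apply: leq_trans ik.
have G_conn := NE_connected NE.
have [conn' card' sums] :=
  swap2_cost_terms s_valid H2ec u2path u_buys G_girth k_ge2 G_conn ik.
exists (alpha * #|s (u i)|%:R + (\sum_(v | v != u i) dist s (u i) v)%:R); split.
  by rewrite /cost ifT //; apply/forallP => v; apply: G_conn.
rewrite /cost ifT; last exact/forallP.
rewrite card' -natr_sum; move/(congr1 (fun n : nat => n%:R : R)): sums.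
by rewrite !natrD => sums; congr Some; lra.
Qed.
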